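(* Let $\kappa_1\le\kappa_2$ be infinite regular cardinals and suppose a $(\kappa_1,\kappa_2)$-peculiar cut in ${}^\omega\omega$ exists. Then there are a $\sigma$-centered forcing notion $\mathbb Q$ of cardinality $\kappa_1$ and a family of $\kappa_2$ open dense subsets of $\mathbb Q$ such that no directed subset $G\subseteq\mathbb Q$ meets all of them. Consequently $\mathbf{MA}_{\kappa_2}(\sigma\text{-centered})$ fails, and $\mathfrak p\le\kappa_2$.
   Context: For $f,g\in{}^\omega\omega$: $f\le^*g$ iff $f(n)\le g(n)$ for all but finitely many $n$; $f<^*g$ iff $f(n)<g(n)$ for all but finitely many $n$. For infinite regular cardinals $\kappa_1,\kappa_2$, a $(\kappa_1,\kappa_2)$-peculiar cut in ${}^\omega\omega$ is a pair $(\langle f_i:i<\kappa_1\rangle,\langle f^\alpha:\alpha<\kappa_2\rangle)$ of sequences in ${}^\omega\omega$ such that: ($\alpha$) $f_j<^*f_i$ for $i<j<\kappa_1$; ($\beta$) $f^\alpha<^*f^\beta$ for $\alpha<\beta<\kappa_2$; ($\gamma$) $f^\alpha<^*f_i$ for all $i<\kappa_1$, $\alpha<\kappa_2$; ($\delta$) if $f\in{}^\omega\omega$ and $f\le^*f_i$ for all $i<\kappa_1$, then $f\le^*f^\alpha$ for some $\alpha<\kappa_2$; ($\varepsilon$) if $f\in{}^\omega\omega$ and $f^\alpha\le^*f$ for all $\alpha<\kappa_2$, then $f_i\le^*f$ for some $i<\kappa_1$. A forcing notion is $\sigma$-centered if it is a countable union of centered sets (sets any finitely many elements of which have a common upper bound).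 $\mathbf{MA}_\mu(\sigma\text{-centered})$ says: for every $\sigma$-centered forcing and every family of $\mu$ dense sets there is a directed set meeting all of them. $\mathfrak p$ is the least cardinality of a family $\mathcal B$ of infinite subsets of $\omega$ all of whose finite subfamilies have infinite intersection but with no infinite $A\subseteq\omega$ such that $A\setminus B$ is finite for all $B\in\mathcal B$. *)

From Stdlib Require Import Arith List.
Import ListNotations.

Definition injective {A B : Type} (f : A -> B) : Prop :=
  forall x y, f x = f y -> x = y.
Definition bijective {A B : Type} (f : A -> B) : Prop :=
  injective f /\ forall y, exists x, f x = y.

Definition card_le (A B : Type) : Prop := exists f : A -> B, injective f.

Definition strict_wellorder {K : Type} (lt : K -> K -> Prop) : Prop :=
  (forall x, ~ lt x x) /\
  (forall x y z, lt x y -> lt y z -> lt x z) /\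
  (forall x y, lt x y \/ x = y \/ lt y x) /\
  well_founded lt.

(* (K, lt) is an infinite regular cardinal, viewed as its initial ordinal:
   - lt is a well-order,
   - every proper initial segment has strictly smaller cardinality,
   - K is infinite,
   - every unbounded subset of K has cardinality |K| (cf = kappa). *)
Definition infinite_regular_cardinal {K : Type} (lt : K -> K -> Prop) : Prop :=
  strict_wellorder lt /\
  (forall x : K, ~ card_le K {y : K | lt y x}) /\
  (exists f : nat -> K, injective f) /\
  (forall S : K -> Prop, (forall x, exists y, S y /\ lt x y) ->
     card_le K {y : K | S y}).

Definition le_star (f g : nat -> nat) : Prop :=
  exists N, forall n, N <= n -> f n <= g n.
Definition lt_star (f g : nat -> nat) : Prop :=
  exists N, forall n, N <= n -> f n < g n.

Definition peculiar_cut {K1 K2 : Type} (lt1 : K1 -> K1 -> Prop)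
  (lt2 : K2 -> K2 -> Prop) (fl : K1 -> nat -> nat) (fu : K2 -> nat -> nat)
  : Prop :=
  (forall i j, lt1 i j -> lt_star (fl j) (fl i)) /\
  (forall a b, lt2 a b -> lt_star (fu a) (fu b)) /\
  (forall i a, lt_star (fu a) (fl i)) /\
  (forall f, (forall i, le_star f (fl i)) -> exists a, le_star f (fu a)) /\
  (forall f, (forall a, le_star (fu a) f) -> exists i, le_star (fl i) f).

(* a forcing notion: a nonempty preorder; [le p q] means q is stronger
   (upper bounds = common extensions, as in the paper). *)
Definition forcing_notion {Q : Type} (le : Q -> Q -> Prop) : Prop :=
  inhabited Q /\ (forall p, le p p) /\
  (forall p q r, le p q -> le q r -> le p r).

Definition centered {Q : Type} (le : Q -> Q -> Prop) (C : Q -> Prop) : Prop :=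
  forall s : list Q, (forall p, In p s -> C p) ->
    exists r, forall p, In p s -> le p r.

Definition sigma_centered {Q : Type} (le : Q -> Q -> Prop) : Prop :=
  exists C : nat -> (Q -> Prop),
    (forall n, centered le (C n)) /\ (forall p, exists n, C n p).

Definition dense {Q : Type} (le : Q -> Q -> Prop) (D : Q -> Prop) : Prop :=
  forall p, exists q, le p q /\ D q.
Definition open_set {Q : Type} (le : Q -> Q -> Prop) (D : Q -> Prop) : Prop :=
  forall p q, D p -> le p q -> D q.
Definition directed {Q : Type} (le : Q -> Q -> Prop) (G : Q -> Prop) : Prop :=
  forall p q, G p -> G q -> exists r, G r /\ le p r /\ le q r.
Definition meets {Q : Type} (G D : Q -> Prop) : Prop :=
  exists p, G p /\ D p.

Definition MA_sigma_centered (M : Type) : Prop :=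
  forall (Q : Type) (le : Q -> Q -> Prop),
    forcing_notion le -> sigma_centered le ->
    forall D : M -> (Q -> Prop), (forall m, dense le (D m)) ->
    exists G : Q -> Prop, directed le G /\ forall m, meets G (D m).

Definition infinite_set (A : nat -> Prop) : Prop :=
  forall n, exists m, n <= m /\ A m.
Definition almost_subset (A B : nat -> Prop) : Prop :=
  exists N, forall m, N <= m -> A m -> B m.

Definition p_le (M : Type) : Prop :=
  exists B : M -> (nat -> Prop),
    (forall m, infinite_set (B m)) /\
    (forall s : list M, infinite_set (fun n => forall m, In m s -> B m n)) /\
    ~ (exists A, infinite_set A /\ forall m, almost_subset A (B m)).

From Stdlib Require Import Arith List Lia Cantor Classical ClassicalEpsilon.
Import ListNotations.

(* A condition is a pair (s, i): a finite stem s of a function g : omega -> omega together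
   with the promise g <= f_i beyond s.  Finitely many f_i have a common lower bound
   f_k mod finite, so conditions with the same stem are compatible and the forcing is
   sigma-centered; it has kappa_1 conditions because |omega x kappa_1| = kappa_1.  The dense
   sets ask for the promise to be below a given f_i and for the stem to exceed a given f^a
   past a given N; a filter meeting all of them describes a g that lies below every f_i but
   above no f^a, which clause (delta) of the cut forbids.
   For p <= kappa_2, the sets of (codes of) lattice points strictly above f^a and below
   f_(c a), for a surjection c from kappa_2 onto kappa_1, have the strong finite
   intersection property; a pseudo-intersection would select, column by column, a function
   above every f^a, hence by (epsilon) above some f_i, leaving no room below the next f_j. *)

Definition surjective {A B : Type} (f : A -> B) : Prop := forall y, exists x, f x = y.

Lemma injective_left_inverse {A B : Type} (f : A -> B) :
  inhabited A -> injective f -> exists g : B -> A, forall a, g (f a) = a.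
Proof.
  intros inh f_inj. exists (fun b => epsilon inh (fun a => f a = b)).
  intro a. apply f_inj.
  exact (epsilon_spec inh (fun a' => f a' = f a) (ex_intro _ a eq_refl)).
Qed.

Lemma left_inverse_surjective {A B : Type} (f : A -> B) (g : B -> A) :
  (forall a, g (f a) = a) -> surjective g.
Proof. intros gf a. exists (f a). apply gf. Qed.

Fixpoint list_code (s : list nat) : nat :=
  match s with [] => 0 | a :: s => S (to_nat (a, list_code s)) end.

Lemma list_code_injective : injective list_code.
Proof.
  intro s; induction s as [|a s IH]; intros [|b t]; cbn [list_code]; try discriminate; auto.
  intro E. apply Nat.succ_inj, to_nat_inj in E. injection E as -> E.
  f_equal. apply IH, E.
Qed.

Lemma exists_surjection_nat_list : exists d : nat -> list nat, surjective d.
Proof.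
  destruct (injective_left_inverse list_code (inhabits []) list_code_injective) as [d dK].
  exists d. exact (left_inverse_surjective _ _ dK).
Qed.

Lemma injection_avoiding_point {K : Type} :
  (exists f : nat -> K, injective f) ->
  forall x : K, exists h : K -> K, injective h /\ forall y, h y <> x.
Proof.
  intros [f f_inj] x.
  pose (index y := epsilon (inhabits 0) (fun n => f n = y)).
  assert (index_spec : forall n, f (index (f n)) = f n).
  { intro n. exact (epsilon_spec _ (fun m => f m = f n) (ex_intro _ n eq_refl)). }
  (* Hilbert's hotel along [f]: [shift] moves [f n] to [f (S n)], so it misses [f 0]. *)
  pose (shift y := if excluded_middle_informative (exists n, f n = y)
                   then f (S (index y)) else y).
  pose (swap z := if excluded_middle_informative (z = f 0) then x
                  else if excluded_middle_informative (z = x) then f 0 else z).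
  assert (shift_inj : injective shift).
  { intros y y'. unfold shift.
    destruct (excluded_middle_informative (exists n, f n = y)) as [[n <-]|Hy];
    destruct (excluded_middle_informative (exists n, f n = y')) as [[n' <-]|Hy'];
    intro E; try (apply f_inj in E); subst; auto.
    - injection E as E. rewrite <- index_spec, E. apply index_spec.
    - exfalso. apply Hy'. eauto.
    - exfalso. apply Hy. eauto. }
  assert (shift_avoids : forall y, shift y <> f 0).
  { intros y. unfold shift.
    destruct (excluded_middle_informative (exists n, f n = y)) as [_|Hy].
    - intro E. apply f_inj in E. discriminate.
    - intro E. apply Hy. eauto. }
  assert (swap_inj : injective swap).
  { intros z z'. unfold swap. repeat destruct excluded_middle_informative; congruence. }
  exists (fun y => swap (shift y)). split.
  - intros y y' E. apply shift_inj, swap_inj, E.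
  - intros y. unfold swap. specialize (shift_avoids y).
    repeat destruct excluded_middle_informative; congruence.
Qed.

Lemma well_founded_minimal {K : Type} (lt : K -> K -> Prop) :
  well_founded lt ->
  forall P : K -> Prop, (exists x, P x) -> exists x, P x /\ forall y, P y -> ~ lt y x.
Proof.
  intros lt_wf P [x Px]. induction (lt_wf x) as [x _ IH].
  destruct (classic (exists y, P y /\ lt y x)) as [[y [Py lt_yx]]|no_smaller].
  - exact (IH y lt_yx Py).
  - exists x. split; [exact Px|]. intros y Py lt_yx. apply no_smaller. eauto.
Qed.

Section WellOrderWithoutMaximum.

Context {K : Type}.
Variable lt : K -> K -> Prop.
Hypothesis lt_irrefl : forall x, ~ lt x x.
Hypothesis lt_trans : forall x y z, lt x y -> lt y z -> lt x z.
Hypothesis lt_total : forall x y, lt x y \/ x = y \/ lt y x.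
Hypothesis lt_wf : well_founded lt.
Hypothesis lt_unbounded : forall x, exists y, lt x y.

Definition succ (x : K) : K :=
  proj1_sig (constructive_indefinite_description _
    (well_founded_minimal lt lt_wf _ (lt_unbounded x))).

Lemma succ_spec x : lt x (succ x) /\ forall z, lt x z -> ~ lt z (succ x).
Proof. unfold succ. destruct constructive_indefinite_description as [y Hy]. exact Hy. Qed.

Lemma lt_succ x : lt x (succ x).
Proof. apply succ_spec. Qed.

Lemma succ_least x z : lt x z -> z = succ x \/ lt (succ x) z.
Proof.
  intro lt_xz. destruct (lt_total z (succ x)) as [H|[H|H]]; auto.
  exfalso. exact (proj2 (succ_spec x) z lt_xz H).
Qed.

Lemma succ_monotone x y : lt x y -> lt (succ x) (succ y).
Proof.
  intro lt_xy. destruct (succ_least x y lt_xy) as [->|H].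
  - apply lt_succ.
  - exact (lt_trans _ _ _ H (lt_succ y)).
Qed.

Lemma succ_injective : injective succ.
Proof.
  intros x y E. destruct (lt_total x y) as [H|[H|H]]; auto;
    apply succ_monotone in H; rewrite E in H; destruct (lt_irrefl _ H).
Qed.

Definition is_limit (l : K) : Prop := forall z, succ z <> l.

Definition shift (l : K) (n : nat) : K := Nat.iter n succ l.

Lemma limit_shift_decomposition y : exists l n, is_limit l /\ shift l n = y.
Proof.
  induction (lt_wf y) as [y _ IH].
  destruct (classic (is_limit y)) as [Hy|Hy].
  - exists y, 0. auto.
  - apply not_all_ex_not in Hy as [z Hz]. apply NNPP in Hz.
    destruct (IH z) as [l [n [Hl Hn]]].
    + rewrite <- Hz. apply lt_succ.
    + exists l, (S n). split; [exact Hl|]. cbn. rewrite <- Hz. f_equal. exact Hn.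
Qed.

Lemma limit_shift_unique l l' n n' :
  is_limit l -> is_limit l' -> shift l n = shift l' n' -> l = l' /\ n = n'.
Proof.
  intros Hl Hl'. revert n'. induction n as [|n IH]; intros [|n'] E; cbn in E.
  - auto.
  - destruct (Hl _ (eq_sym E)).
  - destruct (Hl' _ E).
  - apply succ_injective in E. destruct (IH _ E) as [-> ->]. auto.
Qed.

(* [shift l n |-> (fst (of_nat n), shift l (snd (of_nat n)))] splits each block [l + omega]
   into countably many copies of itself. *)
Lemma exists_surjection_nat_prod : exists phi : K -> nat * K, surjective phi.
Proof.
  destruct (choice (fun y (ln : K * nat) => is_limit (fst ln) /\ shift (fst ln) (snd ln) = y))
    as [dec dec_spec].
  { intro y. destruct (limit_shift_decomposition y) as [l [n H]]. exists (l, n). exact H. }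
  exists (fun y =>
    (fst (of_nat (snd (dec y))), shift (fst (dec y)) (snd (of_nat (snd (dec y)))))).
  intros [a z]. destruct (limit_shift_decomposition z) as [l [m [Hl <-]]].
  exists (shift l (to_nat (a, m))).
  destruct (dec_spec (shift l (to_nat (a, m)))) as [Hl' E].
  destruct (limit_shift_unique _ _ _ _ Hl' Hl E) as [-> ->].
  rewrite cancel_of_to. reflexivity.
Qed.

End WellOrderWithoutMaximum.

Lemma regular_cardinal_unbounded {K : Type} (lt : K -> K -> Prop) :
  infinite_regular_cardinal lt -> forall x, exists y, lt x y.
Proof.
  intros [[_ [_ [lt_total _]]] [small_segments [infinite _]]] x.
  apply NNPP. intro x_max.
  assert (below_x : forall y, y <> x -> lt y x).
  { intros y ne. destruct (lt_total y x) as [H|[H|H]]; [exact H|contradiction|].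
    exfalso. apply x_max. eauto. }
  destruct (injection_avoiding_point infinite x) as [h [h_inj h_avoids]].
  apply (small_segments x).
  exists (fun y => exist _ (h y) (below_x _ (h_avoids y))).
  intros y y' E. apply h_inj. exact (f_equal (@proj1_sig _ _) E).
Qed.

Lemma regular_cardinal_surjection_nat_prod {K : Type} (lt : K -> K -> Prop) :
  infinite_regular_cardinal lt -> exists phi : K -> nat * K, surjective phi.
Proof.
  intro reg. pose proof reg as [[irr [trans [total wf]]] _].
  exact (exists_surjection_nat_prod lt irr trans total wf (regular_cardinal_unbounded lt reg)).
Qed.

Lemma regular_cardinal_surjection_stems {K : Type} (lt : K -> K -> Prop) :
  infinite_regular_cardinal lt -> exists rho : K -> list nat * K, surjective rho.
Proof.
  intro reg. destruct (regular_cardinal_surjection_nat_prod lt reg) as [phi phi_surj].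
  destruct exists_surjection_nat_list as [d d_surj].
  exists (fun x => (d (fst (phi x)), snd (phi x))). intros [s y].
  destruct (d_surj s) as [n <-]. destruct (phi_surj (n, y)) as [x Hx].
  exists x. rewrite Hx. reflexivity.
Qed.

Lemma le_star_refl f : le_star f f.
Proof. exists 0. auto. Qed.

Lemma le_star_trans f g h : le_star f g -> le_star g h -> le_star f h.
Proof.
  intros [N1 H1] [N2 H2]. exists (N1 + N2). intros n Hn.
  specialize (H1 n ltac:(lia)). specialize (H2 n ltac:(lia)). lia.
Qed.

Lemma lt_star_le_star f g : lt_star f g -> le_star f g.
Proof. intros [N H]. exists N. intros n Hn. specialize (H n Hn). lia. Qed.

Lemma eventually_forall_in {X : Type} (P : X -> nat -> Prop) (s : list X) :
  (forall x, In x s -> exists N, forall n, N <= n -> P x n) ->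
  exists N, forall n, N <= n -> forall x, In x s -> P x n.
Proof.
  induction s as [|a s IH]; intros H.
  - exists 0. intros n _ x [].
  - destruct (H a (or_introl eq_refl)) as [M HM].
    destruct IH as [N HN]; [intros; apply H; right; auto|].
    exists (N + M). intros n Hn x [<-|Hx].
    + apply HM. lia.
    + apply HN; auto. lia.
Qed.

Lemma nth_app_repeat_0 (s : list nat) L n : length s <= n -> nth n (s ++ repeat 0 L) 0 = 0.
Proof.
  intro Hn. rewrite app_nth2 by exact Hn. generalize (n - length s).
  induction L as [|L IH]; intros [|k]; cbn; auto.
Qed.

Section StemForcing.

Context {K : Type}.
Variables (lt : K -> K -> Prop) (fl : K -> nat -> nat).
Hypothesis lt_total : forall x y, lt x y \/ x = y \/ lt y x.
Hypothesis fl_decreasing : forall i j, lt i j -> lt_star (fl j) (fl i).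

Lemma fl_lower_bound (k0 : K) (l : list K) :
  exists k N, forall n, N <= n -> forall i, In i l -> fl k n <= fl i n.
Proof.
  assert (bound : exists k, forall i, In i l -> le_star (fl k) (fl i)).
  { induction l as [|a l [k IH]].
    - exists k0. intros i [].
    - destruct (lt_total a k) as [H|[<-|H]].
      + exists k. intros i [<-|Hi]; auto. apply lt_star_le_star, fl_decreasing, H.
      + exists a. intros i [<-|Hi]; auto using le_star_refl.
      + exists a. intros i [<-|Hi]; auto using le_star_refl.
        exact (le_star_trans _ _ _ (lt_star_le_star _ _ (fl_decreasing _ _ H)) (IH i Hi)). }
  destruct bound as [k Hk]. exists k.
  exact (eventually_forall_in (fun i n => fl k n <= fl i n) l Hk).
Qed.

Definition stem_le (p q : list nat * K) : Prop :=
  (exists r, fst q = fst p ++ r) /\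
  (forall n, length (fst p) <= n < length (fst q) -> nth n (fst q) 0 <= fl (snd p) n) /\
  (forall n, length (fst q) <= n -> fl (snd q) n <= fl (snd p) n).

Lemma stem_le_length p q : stem_le p q -> length (fst p) <= length (fst q).
Proof. intros [[r ->] _]. rewrite length_app. lia. Qed.

Lemma stem_le_nth p q n : stem_le p q -> n < length (fst p) -> nth n (fst q) 0 = nth n (fst p) 0.
Proof. intros [[r ->] _] Hn. apply app_nth1, Hn. Qed.

Lemma stem_le_refl p : stem_le p p.
Proof. split; [exists []; symmetry; apply app_nil_r|split; intros; lia]. Qed.

Lemma stem_le_trans p q r : stem_le p q -> stem_le q r -> stem_le p r.
Proof.
  intros Hpq Hqr.
  pose proof (stem_le_length _ _ Hpq) as Lpq. pose proof (stem_le_length _ _ Hqr) as Lqr.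
  pose proof (fun n => stem_le_nth q r n Hqr) as Nqr.
  destruct Hpq as [[s1 E1] [A1 B1]]. destruct Hqr as [[s2 E2] [A2 B2]].
  split; [|split].
  - exists (s1 ++ s2). rewrite E2, E1, app_assoc. reflexivity.
  - intros n Hn. destruct (Nat.lt_ge_cases n (length (fst q))).
    + rewrite Nqr by assumption. apply A1. lia.
    + eapply Nat.le_trans; [apply A2; lia|apply B1; lia].
  - intros n Hn. eapply Nat.le_trans; [apply B2; lia|apply B1; lia].
Qed.

Lemma stem_le_pad s i j L :
  (forall n, length s + L <= n -> fl j n <= fl i n) -> stem_le (s, i) (s ++ repeat 0 L, j).
Proof.
  intro H. split; [|split]; cbn.
  - eauto.
  - intros n Hn. rewrite nth_app_repeat_0 by lia. lia.
  - intros n Hn. apply H. rewrite length_app, repeat_length in Hn. exact Hn.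
Qed.

Lemma stem_class_centered (k0 : K) (s : list nat) : centered stem_le (fun p => fst p = s).
Proof.
  intros ps Hps. destruct (fl_lower_bound k0 (map snd ps)) as [k [N HN]].
  exists (s ++ repeat 0 N, k). intros [t i] Hp.
  specialize (Hps _ Hp). cbn in Hps. subst t.
  apply stem_le_pad. intros n Hn. apply HN; [lia|].
  exact (in_map snd _ (s, i) Hp).
Qed.

Lemma stem_le_sigma_centered (k0 : K) : sigma_centered stem_le.
Proof.
  destruct exists_surjection_nat_list as [d d_surj].
  exists (fun n p => fst p = d n). split.
  - intro n. apply stem_class_centered, k0.
  - intro p. destruct (d_surj (fst p)) as [n Hn]. exists n. auto.
Qed.

Definition bounded_by (i : K) (p : list nat * K) : Prop :=
  forall n, length (fst p) <= n -> fl (snd p) n <= fl i n.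

Definition stem_exceeds (f : nat -> nat) (N : nat) (p : list nat * K) : Prop :=
  exists n, N <= n < length (fst p) /\ f n < nth n (fst p) 0.

Lemma bounded_by_open i : open_set stem_le (bounded_by i).
Proof.
  intros p q Hp Hpq n Hn. pose proof (stem_le_length _ _ Hpq).
  destruct Hpq as [_ [_ B]]. eapply Nat.le_trans; [apply B; lia|apply Hp; lia].
Qed.

Lemma bounded_by_dense i : dense stem_le (bounded_by i).
Proof.
  intros [s j]. destruct (fl_lower_bound i [i; j]) as [k [N HN]].
  exists (s ++ repeat 0 N, k). split.
  - apply stem_le_pad. intros n Hn. apply HN; cbn; auto. lia.
  - intros n Hn. cbn in *. rewrite length_app, repeat_length in Hn. apply HN; cbn; auto. lia.
Qed.

Lemma stem_exceeds_open f N : open_set stem_le (stem_exceeds f N).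
Proof.
  intros p q [n [Hn Hv]] Hpq. pose proof (stem_le_length _ _ Hpq).
  exists n. split; [lia|]. rewrite (stem_le_nth p q) by (auto; lia). exact Hv.
Qed.

(* Pad the stem with zeros up to a large [n] and put [fl j n] at place [n]. *)
Lemma stem_exceeds_dense f N : (forall j, lt_star f (fl j)) -> dense stem_le (stem_exceeds f N).
Proof.
  intros f_below [s j]. destruct (f_below j) as [M HM].
  set (n := N + M + length s).
  set (u := s ++ repeat 0 (n - length s)).
  assert (Lu : length u = n) by (unfold u; rewrite length_app, repeat_length; lia).
  assert (Un : nth n (u ++ [fl j n]) 0 = fl j n).
  { rewrite app_nth2 by lia. rewrite Lu, Nat.sub_diag. reflexivity. }
  assert (Lun : length (u ++ [fl j n]) = S n) by (rewrite length_app, Lu; cbn; lia).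
  exists (u ++ [fl j n], j). split; [split; [|split]|]; cbn.
  - exists (repeat 0 (n - length s) ++ [fl j n]). unfold u. rewrite app_assoc. reflexivity.
  - intros m Hm. rewrite Lun in Hm. destruct (Nat.eq_dec m n) as [->|ne].
    + rewrite Un. lia.
    + rewrite app_nth1 by lia. unfold u. rewrite nth_app_repeat_0 by lia. lia.
  - lia.
  - exists n. cbn. rewrite Lun, Un. split; [lia|]. apply HM. lia.
Qed.

Section Generic.

Variable G : list nat * K -> Prop.
Hypothesis G_directed : directed stem_le G.
Hypothesis G_long : forall n, exists p, G p /\ n < length (fst p).

Lemma generic_stems_coherent p q n :
  G p -> G q -> n < length (fst p) -> n < length (fst q) -> nth n (fst p) 0 = nth n (fst q) 0.
Proof.
  intros Gp Gq Lp Lq. destruct (G_directed p q Gp Gq) as [r [_ [Hpr Hqr]]].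
  rewrite <- (stem_le_nth p r n Hpr Lp). exact (stem_le_nth q r n Hqr Lq).
Qed.

Lemma exists_generic_function :
  exists g : nat -> nat, forall p n, G p -> n < length (fst p) -> g n = nth n (fst p) 0.
Proof.
  destruct (choice (fun n p => G p /\ n < length (fst p)) G_long) as [pick pick_spec].
  exists (fun n => nth n (fst (pick n)) 0). intros p n Gp Lp.
  destruct (pick_spec n). apply generic_stems_coherent; auto.
Qed.

Lemma generic_function_bounded (g : nat -> nat) i :
  (forall p n, G p -> n < length (fst p) -> g n = nth n (fst p) 0) ->
  meets G (bounded_by i) -> le_star g (fl i).
Proof.
  intros g_spec [p [Gp Hp]]. exists (length (fst p)). intros n Hn.
  destruct (G_long n) as [q [Gq Lq]]. destruct (G_directed p q Gp Gq) as [r [Gr [Hpr Hqr]]].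
  pose proof (stem_le_length _ _ Hqr).
  rewrite (g_spec r n Gr ltac:(lia)).
  destruct Hpr as [_ [A _]]. eapply Nat.le_trans; [apply A; lia|]. apply Hp, Hn.
Qed.

End Generic.

Lemma no_generic_filling_gap {K' : Type} (fu : K' -> nat -> nat) (a0 : K') :
  (forall f, (forall i, le_star f (fl i)) -> exists a, le_star f (fu a)) ->
  forall G, directed stem_le G -> (forall i, meets G (bounded_by i)) ->
  ~ (forall a N, meets G (stem_exceeds (fu a) N)).
Proof.
  intros delta G G_directed G_bounded G_exceeds.
  assert (G_long : forall n, exists p, G p /\ n < length (fst p)).
  { intro n. destruct (G_exceeds a0 (S n)) as [p [Gp [m [Hm _]]]]. exists p. split; auto. lia. }
  destruct (exists_generic_function G G_directed G_long) as [g g_spec].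
  destruct (delta g (fun i =>
              generic_function_bounded G G_directed G_long g i g_spec (G_bounded i)))
    as [a [N HN]].
  destruct (G_exceeds a N) as [p [Gp [m [Hm Hv]]]].
  rewrite <- (g_spec p m Gp ltac:(lia)) in Hv. specialize (HN m ltac:(lia)). lia.
Qed.

End StemForcing.

Section Pullback.

Context {T K : Type}.
Variables (le : T -> T -> Prop) (rho : K -> T).
Hypothesis rho_surj : surjective rho.

Let le_rho (x y : K) : Prop := le (rho x) (rho y).

Lemma forcing_notion_pullback : forcing_notion le -> forcing_notion le_rho.
Proof.
  intros [[t] [refl trans]]. destruct (rho_surj t) as [x _].
  split; [constructor; exact x|split].
  - intro y. apply refl.
  - intros y z w. apply trans.
Qed.

Lemma sigma_centered_pullback : sigma_centered le -> sigma_centered le_rho.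
Proof.
  intros [C [C_centered C_cover]].
  exists (fun n x => C n (rho x)). split.
  - intros n xs Hxs. destruct (C_centered n (map rho xs)) as [r Hr].
    { intros t Ht. apply in_map_iff in Ht as [x [<- Hx]]. auto. }
    destruct (rho_surj r) as [y <-]. exists y. intros x Hx. apply Hr, in_map, Hx.
  - intro x. apply C_cover.
Qed.

Lemma open_dense_pullback (D : T -> Prop) :
  open_set le D /\ dense le D ->
  open_set le_rho (fun x => D (rho x)) /\ dense le_rho (fun x => D (rho x)).
Proof.
  intros [D_open D_dense]. split.
  - intros x y. apply D_open.
  - intro x. destruct (D_dense (rho x)) as [t [Ht Dt]]. destruct (rho_surj t) as [y <-]. eauto.
Qed.

Lemma no_generic_pullback {M : Type} (D : M -> T -> Prop) :
  ~ (exists G, directed le G /\ forall a, meets G (D a)) ->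
  ~ (exists G, directed le_rho G /\ forall a, meets G (fun x => D a (rho x))).
Proof.
  intros no_generic [G [G_directed G_meets]]. apply no_generic.
  exists (fun t => exists x, G x /\ rho x = t). split.
  - intros t t' [x [Gx <-]] [x' [Gx' <-]].
    destruct (G_directed x x' Gx Gx') as [y [Gy Hy]]. exists (rho y). eauto.
  - intro a. destruct (G_meets a) as [x [Gx Dx]]. exists (rho x). eauto.
Qed.

Lemma counterexample_pullback {M : Type} (D : M -> T -> Prop) :
  forcing_notion le -> sigma_centered le ->
  (forall a, open_set le (D a) /\ dense le (D a)) ->
  ~ (exists G, directed le G /\ forall a, meets G (D a)) ->
  exists (Q : Type) (le' : Q -> Q -> Prop),
    forcing_notion le' /\ sigma_centered le' /\
    (exists e : Q -> K, bijective e) /\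
    exists D' : M -> (Q -> Prop),
      (forall a, open_set le' (D' a) /\ dense le' (D' a)) /\
      ~ (exists G : Q -> Prop, directed le' G /\ forall a, meets G (D' a)).
Proof.
  intros le_forcing le_centered D_open_dense no_generic.
  exists K, le_rho. split; [|split; [|split]].
  - exact (forcing_notion_pullback le_forcing).
  - exact (sigma_centered_pullback le_centered).
  - exists (fun x => x). split; [intros x y E; exact E|intro y; exists y; reflexivity].
  - exists (fun a x => D a (rho x)). split.
    + intro a. exact (open_dense_pullback _ (D_open_dense a)).
    + exact (no_generic_pullback D no_generic).
Qed.

End Pullback.

Lemma peculiar_cut_stem_forcing {K1 K2 : Type} (lt1 : K1 -> K1 -> Prop)
  (fl : K1 -> nat -> nat) (fu : K2 -> nat -> nat) (c : K2 -> K1) (phi : K2 -> nat * K2)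
  (a0 : K2) :
  (forall x y, lt1 x y \/ x = y \/ lt1 y x) ->
  (forall i j, lt1 i j -> lt_star (fl j) (fl i)) ->
  (forall i a, lt_star (fu a) (fl i)) ->
  (forall f, (forall i, le_star f (fl i)) -> exists a, le_star f (fu a)) ->
  surjective c -> surjective phi ->
  forcing_notion (stem_le fl) /\ sigma_centered (stem_le fl) /\
  exists D : K2 -> (list nat * K1 -> Prop),
    (forall b, open_set (stem_le fl) (D b) /\ dense (stem_le fl) (D b)) /\
    ~ (exists G, directed (stem_le fl) G /\ forall b, meets G (D b)).
Proof.
  intros lt1_total fl_decreasing fu_below delta c_surj phi_surj.
  split; [|split].
  - split; [constructor; exact ([], c a0)|split].
    + apply stem_le_refl.
    + apply stem_le_trans.
  - exact (stem_le_sigma_centered lt1 fl lt1_total fl_decreasing (c a0)).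
  - exists (fun b p => bounded_by fl (c b) p /\ stem_exceeds (fu (snd (phi b))) (fst (phi b)) p).
    split.
    + intro b. split.
      * intros p q [Hb He] Hpq.
        exact (conj (bounded_by_open fl _ _ _ Hb Hpq) (stem_exceeds_open fl _ _ _ _ He Hpq)).
      * intro p.
        destruct (bounded_by_dense lt1 fl lt1_total fl_decreasing (c b) p) as [q [Hpq Hb]].
        destruct (stem_exceeds_dense fl (fu (snd (phi b))) (fst (phi b))
                    (fun j => fu_below j _) q) as [r [Hqr He]].
        exists r. split; [exact (stem_le_trans fl _ _ _ Hpq Hqr)|].
        split; [exact (bounded_by_open fl _ _ _ Hb Hqr)|exact He].
    + intros [G [G_directed G_meets]].
      apply (no_generic_filling_gap fl fu a0 delta G G_directed).
      * intro i. destruct (c_surj i) as [b <-].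
        destruct (G_meets b) as [p [Gp [Hb _]]]. exists p. auto.
      * intros a N. destruct (phi_surj (N, a)) as [b Hb].
        destruct (G_meets b) as [p [Gp [_ He]]]. rewrite Hb in He. exists p. auto.
Qed.

Lemma bounded_below_initial_segment (h : nat -> nat) (C : nat) :
  exists M, forall n, n < C -> h n <= M.
Proof.
  induction C as [|C [M HM]].
  - exists 0. lia.
  - exists (Nat.max M (h C)). intros n Hn.
    destruct (Nat.eq_dec n C) as [->|ne]; [lia|]. specialize (HM n ltac:(lia)). lia.
Qed.

Lemma to_nat_le_square n m : to_nat (n, m) <= (n + m + 1) * (n + m + 1).
Proof. pose proof (to_nat_spec n m). nia. Qed.

Lemma exists_column_selector (A : nat -> Prop) (h : nat -> nat) :
  exists g : nat -> nat, forall n,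
    A (to_nat (n, g n)) \/ ((forall m, ~ A (to_nat (n, m))) /\ g n = h n).
Proof.
  apply (choice (fun n v => A (to_nat (n, v)) \/ ((forall m, ~ A (to_nat (n, m))) /\ v = h n))).
  intro n. destruct (classic (exists m, A (to_nat (n, m)))) as [[m Hm]|none].
  - exists m. auto.
  - exists (h n). right. split; auto. intros m Hm. apply none. eauto.
Qed.

Section GapSets.

Context {K1 K2 : Type}.
Variables (lt1 : K1 -> K1 -> Prop) (fl : K1 -> nat -> nat) (fu : K2 -> nat -> nat) (c : K2 -> K1).
Hypothesis lt1_unbounded : forall i, exists j, lt1 i j.
Hypothesis fl_decreasing : forall i j, lt1 i j -> lt_star (fl j) (fl i).
Hypothesis fu_below : forall i a, lt_star (fu a) (fl i).
Hypothesis epsilon_clause : forall f, (forall a, le_star (fu a) f) -> exists i, le_star (fl i) f.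
Hypothesis c_surj : surjective c.

Definition gap_set (b : K2) (k : nat) : Prop :=
  fu b (fst (of_nat k)) < snd (of_nat k) <= fl (c b) (fst (of_nat k)).

Lemma gap_set_code b n m : gap_set b (to_nat (n, m)) <-> fu b n < m <= fl (c b) n.
Proof. unfold gap_set. rewrite cancel_of_to. reflexivity. Qed.

Lemma gap_sets_finite_intersection (s : list K2) :
  infinite_set (fun k => forall b, In b s -> gap_set b k).
Proof.
  intro n0.
  destruct (eventually_forall_in (fun b n => forall a, In a s -> fu a n < fl (c b) n) s)
    as [N HN].
  { intros b _. apply eventually_forall_in. intros a _. apply fu_below. }
  set (n := n0 + N). set (heights := map (fun a => fu a n) s).
  assert (heights_le : forall M, list_max heights <= M <-> forall a, In a s -> fu a n <= M).
  { intro M. rewrite list_max_le, Forall_forall. unfold heights. split.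
    - intros H a Ha. apply H. exact (in_map (fun a => fu a n) s a Ha).
    - intros H k Hk. apply in_map_iff in Hk as [a [<- Ha]]. auto. }
  exists (to_nat (n, S (list_max heights))). split.
  - pose proof (to_nat_non_decreasing n (S (list_max heights))). lia.
  - intros b Hb. apply gap_set_code. split.
    + apply Nat.lt_succ_r, heights_le. reflexivity. exact Hb.
    + assert (list_max heights <= fl (c b) n - 1) by
        (apply heights_le; intros a Ha; specialize (HN n ltac:(lia) b Hb a Ha); lia).
      specialize (HN n ltac:(lia) b Hb b Hb). lia.
Qed.

Lemma column_selector_above (A : nat -> Prop) (i0 : K1) (g : nat -> nat) :
  (forall b, almost_subset A (gap_set b)) ->
  (forall n, A (to_nat (n, g n)) \/ ((forall m, ~ A (to_nat (n, m))) /\ g n = fl i0 n)) ->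
  forall a, le_star (fu a) g.
Proof.
  intros A_sub g_spec a. destruct (A_sub a) as [N HN]. destruct (fu_below i0 a) as [M HM].
  exists (N + M). intros n Hn. destruct (g_spec n) as [HA|[_ ->]].
  - pose proof (to_nat_non_decreasing n (g n)).
    apply HN in HA; [rewrite gap_set_code in HA; lia|lia].
  - apply Nat.lt_le_incl, HM. lia.
Qed.

Lemma gap_sets_no_pseudointersection (i0 : K1) :
  ~ exists A, infinite_set A /\ forall b, almost_subset A (gap_set b).
Proof.
  intros [A [A_inf A_sub]].
  destruct (exists_column_selector A (fl i0)) as [g g_spec].
  destruct (epsilon_clause g (column_selector_above A i0 g A_sub g_spec)) as [i [P HP]].
  destruct (lt1_unbounded i) as [j Hij]. destruct (fl_decreasing i j Hij) as [R HR].
  destruct (c_surj j) as [b <-]. destruct (A_sub b) as [N HN].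
  remember (P + R + N) as C eqn:HC.
  destruct (bounded_below_initial_segment (fl (c b)) C) as [B HB].
  destruct (A_inf ((C + B + 1) * (C + B + 1) + N + 1)) as [k [Hk Ak]].
  rewrite <- (cancel_to_of k) in Ak, Hk. destruct (of_nat k) as [n m].
  pose proof (HN (to_nat (n, m)) ltac:(lia) Ak) as Hgap. rewrite gap_set_code in Hgap.
  destruct (Nat.lt_ge_cases n C) as [small|large].
  - specialize (HB n small). pose proof (to_nat_le_square n m).
    assert ((n + m + 1) * (n + m + 1) <= (C + B + 1) * (C + B + 1))
      by (apply Nat.mul_le_mono; lia).
    lia.
  - destruct (g_spec n) as [Ag|[none _]]; [|exact (none m Ak)].
    pose proof (to_nat_non_decreasing n (g n)).
    apply HN in Ag; [rewrite gap_set_code in Ag|lia].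
    specialize (HR n ltac:(lia)). specialize (HP n ltac:(lia)). lia.
Qed.

Lemma peculiar_cut_p_le (i0 : K1) : p_le K2.
Proof.
  exists gap_set. split; [|split].
  - intros b n. destruct (gap_sets_finite_intersection [b] n) as [k [Hk Hb]].
    exists k. split; [exact Hk|]. apply Hb. left. reflexivity.
  - exact gap_sets_finite_intersection.
  - exact (gap_sets_no_pseudointersection i0).
Qed.

End GapSets.

Theorem proposition3p1 (K1 K2 : Type) (lt1 : K1 -> K1 -> Prop)
  (lt2 : K2 -> K2 -> Prop)
  (reg1 : infinite_regular_cardinal lt1)
  (reg2 : infinite_regular_cardinal lt2)
  (k1_le_k2 : card_le K1 K2)
  (cut : exists (fl : K1 -> nat -> nat) (fu : K2 -> nat -> nat),
           peculiar_cut lt1 lt2 fl fu) :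
  (exists (Q : Type) (le : Q -> Q -> Prop),
      forcing_notion le /\ sigma_centered le /\
      (exists e : Q -> K1, bijective e) /\
      exists D : K2 -> (Q -> Prop),
        (forall a, open_set le (D a) /\ dense le (D a)) /\
        ~ (exists G : Q -> Prop, directed le G /\ forall a, meets G (D a)))
  /\ ~ MA_sigma_centered K2
  /\ p_le K2.
Proof.
  destruct cut as [fl [fu [fl_decreasing [_ [fu_below [delta epsilon_clause]]]]]].
  pose proof reg1 as [[_ [_ [lt1_total _]]] [_ [[enum1 _] _]]].
  pose proof reg2 as [_ [_ [[enum2 _] _]]].
  destruct k1_le_k2 as [e e_inj].
  destruct (injective_left_inverse e (inhabits (enum1 0)) e_inj) as [c c_e].
  pose proof (left_inverse_surjective e c c_e) as c_surj.
  destruct (regular_cardinal_surjection_nat_prod lt2 reg2) as [phi phi_surj].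
  destruct (regular_cardinal_surjection_stems lt1 reg1) as [rho rho_surj].
  destruct (peculiar_cut_stem_forcing lt1 fl fu c phi (enum2 0) lt1_total fl_decreasing
              fu_below delta c_surj phi_surj) as [P_forcing [P_centered [D [D_dense no_generic]]]].
  pose proof (counterexample_pullback _ rho rho_surj D P_forcing P_centered D_dense no_generic)
    as Q_exists.
  split; [exact Q_exists|split].
  - intro MA.
    destruct Q_exists as [Q [le [le_forcing [le_centered [_ [D' [D'_dense no_generic']]]]]]].
    apply no_generic', MA; [exact le_forcing|exact le_centered|intro a; apply D'_dense].
  - exact (peculiar_cut_p_le lt1 fl fu c (regular_cardinal_unbounded lt1 reg1) fl_decreasing
             fu_below epsilon_clause c_surj (enum1 0)).
Qed.
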